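(* A Leibniz algebra $A$ over $k$ has an actor (in the category of Leibniz algebras) if and only if $A$ satisfies Condition 1. If this is the case, then $\mathfrak{B}(A)=\mathrm{Actor}(A)$.
   Context: $k$ is a commutative ring with unit. A Leibniz algebra is a $k$-module $L$ with a bilinear bracket satisfying $[x,[y,z]]=[[x,y],z]-[[x,z],y]$. An action of a Leibniz algebra $B$ on a Leibniz algebra $A$ is a pair of bilinear maps $B\times A\to A$, $(b,a)\mapsto[b,a]$, and $A\times B\to A$, $(a,b)\mapsto[a,b]$, such that for all $a,a_1,a_2\in A$, $b,b_1,b_2\in B$: $[a_1,[a_2,b]]=[[a_1,a_2],b]-[[a_1,b],a_2]$; $[a_1,[b,a_2]]=[[a_1,b],a_2]-[[a_1,a_2],b]$; $[b,[a_1,a_2]]=[[b,a_1],a_2]-[[b,a_2],a_1]$; $[a,[b_1,b_2]]=[[a,b_1],b_2]-[[a,b_2],b_1]$; $[b_1,[a,b_2]]=[[b_1,a],b_2]-[[b_1,b_2],a]$; $[b_1,[b_2,a]]=[[b_1,b_2],a]-[[b_1,a],b_2]$. A crossed module of Leibniz algebras is a Leibniz algebra homomorphism $\partial:A\to G$ together with an action of $G$ on $A$ such that $\partial[g,a]=[g,\partial a]$, $\partial[a,g]=[\partial a,g]$, $[\partial a,a']=[a,a']$ and $[a',\partial a]=[a',a]$ for all $g\in G$, $a,a'\in A$. An actor of $A$ is a crossed module $\partial:A\to\mathrm{Actor}(A)$ such that for every Leibniz algebra $C$ with an action on $A$ there is a unique Leibniz algebra homomorphism $\varphi:C\to\mathrm{Actor}(A)$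 with $[\varphi(c),a]=[c,a]$ and $[a,\varphi(c)]=[a,c]$ for all $c\in C$, $a\in A$. Condition 1: for any two Leibniz algebras $B,C$ acting on $A$, $[c,[a,b]]=-[c,[b,a]]$ for all $a\in A$, $b\in B$, $c\in C$. Construction of $\mathfrak{B}(A)$: let $(B_j)_{j\in J}$ range over all Leibniz algebras equipped with an action on $A$ (one index per action). For $b\in B_j$ let $\mathbf b$ be the pair of $k$-linear maps $A\to A$, $a\mapsto[a,\mathbf b]:=[a,b]$ and $a\mapsto[\mathbf b,a]:=[b,a]$. On pairs $x=([-,x],[x,-])$ of $k$-linear maps $A\to A$ define addition and scalar multiplication componentwise and the bracket $[x,y]$ by $[a,[x,y]]=[[a,x],y]-[[a,y],x]$, $[[x,y],a]=[x,[y,a]]+[[x,a],y]$ (Definition 4.1; under Condition 1 this agrees with the alternative Definition 4.2, $[[x,y],a]=-[x,[a,y]]+[[x,a],y]$). $\mathfrak{B}(A)$ is the set of pairs obtained from all the $\mathbf b$ by iterating these operations; it acts on $A$ via its two maps, and $A\to\mathfrak{B}(A)$ sends $a$ to the pair $([-,a],[a,-])$. *)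

From mathcomp Require Import all_boot all_algebra.
Set Implicit Arguments.
Unset Strict Implicit.
Unset Printing Implicit Defensive.
Import GRing.Theory.
Local Open Scope ring_scope.

Record leibAlg (k : comPzRingType) := LeibAlg {
  lcar :> lmodType k;
  lbr : lcar -> lcar -> lcar;
  lbr_linl : forall (c : k) (x y z : lcar),
      lbr (c *: x + y) z = c *: lbr x z + lbr y z;
  lbr_linr : forall (c : k) (x y z : lcar),
      lbr z (c *: x + y) = c *: lbr z x + lbr z y;
  lbr_leibniz : forall x y z : lcar,
      lbr x (lbr y z) = lbr (lbr x y) z - lbr (lbr x z) y
}.
Arguments lbr {k} l _ _.

Section Defs.
Variable k : comPzRingType.

Definition bilinear_map (U V W : lmodType k) (f : U -> V -> W) : Prop :=
  (forall (c : k) (x y : U) (z : V), f (c *: x + y) z = c *: f x z + f y z) /\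
  (forall (c : k) (x : U) (y z : V), f x (c *: y + z) = c *: f x y + f x z).

(** An action of [B] on [A]: [lact b a] is [[b,a]], [ract a b] is [[a,b]]. *)
Definition is_action (B A : leibAlg k)
    (lact : B -> A -> A) (ract : A -> B -> A) : Prop :=
  [/\ bilinear_map lact, bilinear_map ract,
   (forall (a1 a2 : A) (b : B),
      lbr A a1 (ract a2 b) = ract (lbr A a1 a2) b - lbr A (ract a1 b) a2),
   (forall (a1 a2 : A) (b : B),
      lbr A a1 (lact b a2) = lbr A (ract a1 b) a2 - ract (lbr A a1 a2) b) &
   [/\ (forall (b : B) (a1 a2 : A),
      lact b (lbr A a1 a2) = lbr A (lact b a1) a2 - lbr A (lact b a2) a1),
      (forall (a : A) (b1 b2 : B),
        ract a (lbr B b1 b2) = ract (ract a b1) b2 - ract (ract a b2) b1),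
      (forall (b1 b2 : B) (a : A),
        lact b1 (ract a b2) = ract (lact b1 a) b2 - lact (lbr B b1 b2) a) &
      (forall (b1 b2 : B) (a : A),
        lact b1 (lact b2 a) = lact (lbr B b1 b2) a - ract (lact b1 a) b2)]].

Definition is_leib_hom (L M : leibAlg k) (f : L -> M) : Prop :=
  (forall (c : k) (x y : L), f (c *: x + y) = c *: f x + f y) /\
  (forall x y : L, f (lbr L x y) = lbr M (f x) (f y)).

Definition is_crossed_module (A G : leibAlg k)
    (lG : G -> A -> A) (rG : A -> G -> A) (d : A -> G) : Prop :=
  [/\ is_leib_hom d, is_action lG rG,
   (forall (g : G) (a : A), d (lG g a) = lbr G g (d a)) &
   [/\
   (forall (g : G) (a : A), d (rG a g) = lbr G (d a) g),
    (forall a a' : A, lG (d a) a' = lbr A a a') &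
   (forall a a' : A, rG a' (d a) = lbr A a' a)]].

Definition is_actor (A G : leibAlg k)
    (lG : G -> A -> A) (rG : A -> G -> A) (d : A -> G) : Prop :=
  is_crossed_module lG rG d /\
  forall (C : leibAlg k) (lC : C -> A -> A) (rC : A -> C -> A),
    is_action lC rC ->
    exists phi : C -> G,
      [/\ is_leib_hom phi,
          (forall (c : C) (a : A), lG (phi c) a = lC c a),
          (forall (c : C) (a : A), rG a (phi c) = rC a c) &
          (forall psi : C -> G,
             is_leib_hom psi ->
             (forall (c : C) (a : A), lG (psi c) a = lC c a) ->
             (forall (c : C) (a : A), rG a (psi c) = rC a c) ->
             forall c, psi c = phi c)].

Definition has_actor (A : leibAlg k) : Prop :=
  exists (G : leibAlg k) (lG : G -> A -> A) (rG : A -> G -> A) (d : A -> G),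
    is_actor lG rG d.

Definition condition1 (A : leibAlg k) : Prop :=
  forall (B C : leibAlg k) (lB : B -> A -> A) (rB : A -> B -> A)
         (lC : C -> A -> A) (rC : A -> C -> A),
    is_action lB rB -> is_action lC rC ->
    forall (a : A) (b : B) (c : C), lC c (rB a b) = - lC c (lB b a).

(** Pairs [x = ([-,x], [x,-])] of maps [A -> A]: the first component is
    [a |-> [a,x]], the second is [a |-> [x,a]]. *)
Definition pairA (A : leibAlg k) : Type := ((A -> A) * (A -> A))%type.

Definition pair_add (A : leibAlg k) (x y : pairA A) : pairA A :=
  (fun a => x.1 a + y.1 a, fun a => x.2 a + y.2 a).

Definition pair_scale (A : leibAlg k) (c : k) (x : pairA A) : pairA A :=
  (fun a => c *: x.1 a, fun a => c *: x.2 a).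

(** Definition 4.1: [a,[x,y]] = [[a,x],y] - [[a,y],x] and
    [[x,y],a] = [x,[y,a]] + [[x,a],y]. *)
Definition pair_br (A : leibAlg k) (x y : pairA A) : pairA A :=
  (fun a => y.1 (x.1 a) - x.1 (y.1 a), fun a => x.2 (y.2 a) + y.1 (x.2 a)).

Definition bold (A B : leibAlg k) (lB : B -> A -> A) (rB : A -> B -> A)
    (b : B) : pairA A := (fun a => rB a b, fun a => lB b a).

Inductive inBA (A : leibAlg k) : pairA A -> Prop :=
  | inBA_gen (B : leibAlg k) (lB : B -> A -> A) (rB : A -> B -> A) (b : B) :
      is_action lB rB -> inBA (bold lB rB b)
  | inBA_add x y : inBA x -> inBA y -> inBA (pair_add x y)
  | inBA_scale (c : k) x : inBA x -> inBA (pair_scale c x)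
  | inBA_br x y : inBA x -> inBA y -> inBA (pair_br x y).

(** "B(A) = Actor(A)": the canonical map [g |-> ([-,g],[g,-])] from the actor
    to pairs of maps is an isomorphism of Leibniz algebras onto B(A),
    compatible with the actions and with the crossed-module maps. *)
Definition actor_is_BA (A G : leibAlg k)
    (lG : G -> A -> A) (rG : A -> G -> A) (d : A -> G) : Prop :=
  let iota := bold lG rG in
  [/\ injective iota,
      (forall x : pairA A, inBA x <-> exists g : G, iota g = x),
      (forall (c : k) (g h : G),
          iota (c *: g + h) = pair_add (pair_scale c (iota g)) (iota h)),
      (forall g h : G, iota (lbr G g h) = pair_br (iota g) (iota h)) &
      (forall a : A, iota (d a) = (fun a' => lbr A a' a, fun a' => lbr A a a'))].

End Defs.

(* Every element x of B(A) gives a biderivation (-x.1, x.2) of A in Loday's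
   sense, since the generators do and the operations preserve biderivations.
   The Leibniz identity of B(A) then holds as soon as
   x.2 (y.1 a) = - x.2 (y.2 a) for x, y in B(A).  This is Condition 1 carried
   over to B(A): y.2 a + y.1 a is killed by every left action (Condition 1 on
   the generators, induction on y otherwise), and x.2 kills every such element.
   So B(A) is a Leibniz algebra acting on A, and the maps b |-> bold b are the
   universal maps: B(A) is an actor.
   Conversely, in any action [g,[a,h]] = -[g,[h,a]] holds, so the universal
   maps into an actor transport Condition 1.  Finally, if G is an actor, the
   universal map B(A) -> G and g |-> g are inverse to each other, because the
   only endomorphism of an actor compatible with its action is the identity. *)
From HB Require Import structures.
From mathcomp Require Import all_boot all_algebra.
From mathcomp Require Import ring.
From mathcomp Require Import boolp.
Set Implicit Arguments.
Unset Strict Implicit.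
Unset Printing Implicit Defensive.
Import GRing.Theory.
Local Open Scope ring_scope.

(* The square-zero extension k + V: embedding V in this commutative ring lets
   [ring] decide the identities of k-modules used below. *)
Section SquareZeroExtension.
Variables (k : comPzRingType) (V : lmodType k).

Definition sqz := (k * V)%type.
HB.instance Definition _ := GRing.Zmodule.on sqz.

Definition sqz_mul (x y : sqz) : sqz := (x.1 * y.1, x.1 *: y.2 + y.1 *: x.2).
Definition sqz_one : sqz := (1, 0).

Lemma sqz_mulA : associative sqz_mul.
Proof.
move=> [a u] [b v] [c w]; congr pair; first by rewrite /= mulrA.
by rewrite /= !scalerDr !scalerA addrA [c * a]mulrC [b * c]mulrC.
Qed.

Lemma sqz_mulC : commutative sqz_mul.
Proof. by move=> [a u] [b v]; rewrite /sqz_mul /= mulrC addrC. Qed.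

Lemma sqz_mul1 : left_id sqz_one sqz_mul.
Proof. by move=> [a u]; rewrite /sqz_mul /= mul1r scale1r scaler0 addr0. Qed.

Lemma sqz_mulDl : left_distributive sqz_mul +%R.
Proof.
move=> [a u] [b v] [c w]; congr pair; first by rewrite /= mulrDl.
by rewrite /= scalerDl scalerDr addrACA.
Qed.

HB.instance Definition _ :=
  GRing.Zmodule_isComPzRing.Build sqz sqz_mulA sqz_mulC sqz_mul1 sqz_mulDl.

Definition sqz_of (v : V) : sqz := (0, v).

Lemma sqz_ofD u v : sqz_of (u + v) = sqz_of u + sqz_of v.
Proof. by congr pair; rewrite addr0. Qed.

Lemma sqz_ofN u : sqz_of (- u) = - sqz_of u.
Proof. by congr pair; rewrite oppr0. Qed.

Lemma sqz_of0 : sqz_of 0 = 0.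
Proof. by []. Qed.

Lemma sqz_ofZ (c : k) u : sqz_of (c *: u) = ((c, 0) : sqz) * sqz_of u.
Proof. by rewrite /GRing.mul /= /sqz_mul /= mulr0 scaler0 addr0. Qed.

Lemma sqz_of_inj : injective sqz_of.
Proof. by move=> u v []. Qed.

End SquareZeroExtension.

Ltac lmod_ring :=
  apply: sqz_of_inj; rewrite ?(sqz_ofD, sqz_ofN, sqz_ofZ, sqz_of0); ring.

Section LinearMaps.
Variables (k : comPzRingType) (U V : lmodType k).

Definition lin (f : U -> V) := forall c u v, f (c *: u + v) = c *: f u + f v.

Variables (f : U -> V) (f_lin : lin f).

Lemma lin0 : f 0 = 0.
Proof. by have := f_lin (-1) 0 0; rewrite scaler0 addr0 scaleN1r addNr. Qed.

Lemma linD u v : f (u + v) = f u + f v.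
Proof. by have := f_lin 1 u v; rewrite !scale1r. Qed.

Lemma linZ c u : f (c *: u) = c *: f u.
Proof. by have := f_lin c u 0; rewrite !addr0 lin0 addr0. Qed.

Lemma linN u : f (- u) = - f u.
Proof. by rewrite -scaleN1r linZ scaleN1r. Qed.

Lemma linB u v : f (u - v) = f u - f v.
Proof. by rewrite linD linN. Qed.

End LinearMaps.

Section LeibnizBracket.
Variables (k : comPzRingType) (L : leibAlg k).
Local Notation br := (lbr L).

Lemma lin_lbrl z : lin (br^~ z). Proof. by move=> c x y; apply: lbr_linl. Qed.
Lemma lin_lbrr z : lin (br z). Proof. by move=> c x y; apply: lbr_linr. Qed.

Lemma lbrDl u v w : br (u + v) w = br u w + br v w. Proof. exact: (linD (lin_lbrl w) u v). Qed.
Lemma lbrDr u v w : br w (u + v) = br w u + br w v. Proof. exact: (linD (lin_lbrr w) u v). Qed.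
Lemma lbrNl u w : br (- u) w = - br u w. Proof. exact: (linN (lin_lbrl w) u). Qed.
Lemma lbrNr u w : br w (- u) = - br w u. Proof. exact: (linN (lin_lbrr w) u). Qed.
Lemma lbrZl c u w : br (c *: u) w = c *: br u w. Proof. exact: (linZ (lin_lbrl w) c u). Qed.
Lemma lbrZr c u w : br w (c *: u) = c *: br w u. Proof. exact: (linZ (lin_lbrr w) c u). Qed.

Lemma lbr_action : is_action br br.
Proof.
have bil : bilinear_map br by split=> *; [apply: lbr_linl | apply: lbr_linr].
by split=> //; try split; move=> *; apply: lbr_leibniz.
Qed.

Lemma leib_hom_id : is_leib_hom (@id L).
Proof. by []. Qed.

End LeibnizBracket.

Lemma leib_hom_comp (k : comPzRingType) (L M N : leibAlg k) (f : L -> M) (g : M -> N) :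
  is_leib_hom f -> is_leib_hom g -> is_leib_hom (g \o f).
Proof. by move=> [fD fB] [gD gB]; split=> [c x y | x y] /=; rewrite ?fD ?gD ?fB ?gB. Qed.

Lemma pair_ext (k : comPzRingType) (A : leibAlg k) (p q : pairA A) :
  p.1 =1 q.1 -> p.2 =1 q.2 -> p = q.
Proof. by case: p q => [p1 p2] [q1 q2] /= /funext-> /funext->. Qed.

Section Biderivations.
Variables (k : comPzRingType) (A : leibAlg k).
Local Notation br := (lbr A).

(* [x] satisfies these iff (-x.1, x.2) is a biderivation of A in Loday's sense. *)
Record biderivation (x : pairA A) : Prop := {
  bider1_lin : lin x.1;
  bider2_lin : lin x.2;
  bider1_br : forall a1 a2, br a1 (x.1 a2) = x.1 (br a1 a2) - br (x.1 a1) a2;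
  bider_ann : forall u a, br u (x.2 a) = - br u (x.1 a);
  bider2_br : forall a1 a2, x.2 (br a1 a2) = br (x.2 a1) a2 - br (x.2 a2) a1 }.

Section Biderivation.
Variables (x : pairA A) (bx : biderivation x).

Lemma bider1_derivation a1 a2 : x.1 (br a1 a2) = br (x.1 a1) a2 + br a1 (x.1 a2).
Proof. by rewrite (bider1_br bx); lmod_ring. Qed.

Lemma bider2_br_r a1 a2 : br a1 (x.2 a2) = br (x.1 a1) a2 - x.1 (br a1 a2).
Proof. by rewrite (bider_ann bx) bider1_derivation; lmod_ring. Qed.

Lemma bider_scale c : biderivation (pair_scale c x).
Proof.
have [X1 X2 _ _ _] := bx.
split=> /= [d u v | d u v | a1 a2 | u a | a1 a2]; rewrite ?(X1, X2).
- by lmod_ring.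
- by lmod_ring.
- by rewrite !(lbrZr, lbrZl) (bider1_br bx); lmod_ring.
- by rewrite !lbrZr (bider_ann bx); lmod_ring.
- by rewrite !lbrZl (bider2_br bx); lmod_ring.
Qed.

Lemma bider_ann_comp y (biy : biderivation y) u a :
  br u (y.1 (x.2 a)) = - br u (y.1 (x.1 a)).
Proof.
have ann_sum v : br v (x.2 a + x.1 a) = 0 by rewrite lbrDr (bider_ann bx); lmod_ring.
have : br u (y.1 (x.2 a + x.1 a)) = 0.
  by rewrite (bider1_br biy) !ann_sum (lin0 (bider1_lin biy)) subr0.
by rewrite (linD (bider1_lin biy)) lbrDr => /eqP; rewrite addr_eq0 => /eqP.
Qed.

End Biderivation.

Variables (x y : pairA A) (bx : biderivation x) (biy : biderivation y).

Lemma bider_add : biderivation (pair_add x y).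
Proof.
have [X1 X2 _ _ _] := bx; have [Y1 Y2 _ _ _] := biy.
split=> /= [c u v | c u v | a1 a2 | u a | a1 a2]; rewrite ?(X1, X2, Y1, Y2).
- by lmod_ring.
- by lmod_ring.
- by rewrite !(lbrDr, lbrDl) (bider1_br bx) (bider1_br biy); lmod_ring.
- by rewrite !lbrDr (bider_ann bx) (bider_ann biy); lmod_ring.
- by rewrite !lbrDl (bider2_br bx) (bider2_br biy); lmod_ring.
Qed.

Lemma bider_br : biderivation (pair_br x y).
Proof.
have [X1 X2 _ _ _] := bx; have [Y1 Y2 _ _ _] := biy.
split=> /= [c u v | c u v | a1 a2 | u a | a1 a2].
- by rewrite ?(X1, Y1, linD X1, linZ X1); lmod_ring.
- by rewrite ?(X2, Y2, linD Y1, linZ Y1); lmod_ring.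
- rewrite !(lbrDr, lbrNr, lbrDl, lbrNl, linD X1, linD Y1, linN X1, linN Y1,
    bider1_derivation bx, bider1_derivation biy).
  by lmod_ring.
- rewrite !lbrDr lbrNr (bider_ann_comp bx biy) (bider_ann bx) (bider_ann_comp biy bx).
  by lmod_ring.
- rewrite !(lbrDr, lbrNr, lbrDl, lbrNl, linD X1, linD Y1, linN X1, linN Y1,
    linD X2, linD Y2, linN X2, linN Y2, bider1_derivation bx, bider1_derivation biy,
    bider2_br bx, bider2_br biy, bider_ann bx, bider_ann biy).
  by lmod_ring.
Qed.

End Biderivations.

Section Action.
Variables (k : comPzRingType) (A B : leibAlg k).
Variables (lB : B -> A -> A) (rB : A -> B -> A) (actB : is_action lB rB).

Lemma action_lin_l b : lin (lB b).
Proof. by case: actB => [[_ lin_lB] _ _ _ _] c u v; rewrite lin_lB. Qed.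

Lemma action_antisym_r b1 b2 a : lB b1 (rB a b2) = - lB b1 (lB b2 a).
Proof. by case: actB => [_ _ _ _ [_ _ -> ->]]; lmod_ring. Qed.

Lemma bold_linear c b1 b2 :
  bold lB rB (c *: b1 + b2) = pair_add (pair_scale c (bold lB rB b1)) (bold lB rB b2).
Proof.
by case: actB => [[lin_lB _] [_ lin_rB] _ _ _]; apply: pair_ext => a /=;
  [exact: lin_rB | exact: lin_lB].
Qed.

Lemma bold_lbr b1 b2 :
  bold lB rB (lbr B b1 b2) = pair_br (bold lB rB b1) (bold lB rB b2).
Proof.
case: actB => [_ _ _ _ [_ rB_lbr _ lB_lB]]; apply: pair_ext => a /=.
  exact: rB_lbr.
by rewrite lB_lB; lmod_ring.
Qed.

Lemma bider_bold b : biderivation (bold lB rB b).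
Proof.
have [[_ lin_lB] [lin_rB _] rB_lbr lbr_lB [lB_lbr _ _ _]] := actB.
split=> /= [c u v | c u v | a1 a2 | u a | a1 a2].
- exact: lin_rB.
- exact: lin_lB.
- by rewrite rB_lbr.
- by rewrite lbr_lB rB_lbr; lmod_ring.
- exact: lB_lbr.
Qed.

End Action.

Lemma bider_inBA (k : comPzRingType) (A : leibAlg k) (x : pairA A) :
  inBA x -> biderivation x.
Proof.
elim=> {x} [B lB rB b actB | x y _ bx _ biy | c x _ bx | x y _ bx _ biy].
- exact: bider_bold.
- exact: bider_add.
- exact: bider_scale.
- exact: bider_br.
Qed.

Section Annihilators.
Variables (k : comPzRingType) (A : leibAlg k).

Definition annihilated (w : A) :=
  forall (C : leibAlg k) (lC : C -> A -> A) rC, is_action lC rC -> forall c, lC c w = 0.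

Lemma annihilatedD u v : annihilated u -> annihilated v -> annihilated (u + v).
Proof.
move=> Ku Kv C lC rC actC c.
by rewrite (linD (action_lin_l actC c)) (Ku _ _ _ actC) (Kv _ _ _ actC) addr0.
Qed.

Lemma annihilatedN u : annihilated u -> annihilated (- u).
Proof.
by move=> Ku C lC rC actC c; rewrite (linN (action_lin_l actC c)) (Ku _ _ _ actC) oppr0.
Qed.

Lemma annihilatedZ c u : annihilated u -> annihilated (c *: u).
Proof.
by move=> Ku C lC rC actC d; rewrite (linZ (action_lin_l actC d)) (Ku _ _ _ actC) scaler0.
Qed.

Lemma inBA2_annihilated w (x : pairA A) : annihilated w -> inBA x -> x.2 w = 0.
Proof.
move=> Kw; elim=> {x} [B lB rB b actB | x y _ Kx _ Ky | c x _ Kx | x y Ix Kx Iy Ky] /=.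
- exact: (Kw _ _ _ actB).
- by rewrite Kx Ky addr0.
- by rewrite Kx scaler0.
- by rewrite Ky Kx (lin0 (bider2_lin (bider_inBA Ix))) (lin0 (bider1_lin (bider_inBA Iy)))
    addr0.
Qed.

Hypothesis cond1 : condition1 A.

Lemma inBA_annihilated_sum (y : pairA A) a : inBA y -> annihilated (y.2 a + y.1 a).
Proof.
move=> Iy; elim: Iy a => {y}
  [B lB rB b actB | x y _ Kx _ Ky | c x _ Kx | x y Ix Kx Iy Ky] a /=.
- move=> C lC rC actC c.
  by rewrite (linD (action_lin_l actC c)) (cond1 actB actC); lmod_ring.
- rewrite addrACA; exact: annihilatedD.
- rewrite -scalerDr; exact: annihilatedZ.
- have [X1 X2 _ _ _] := bider_inBA Ix; have [Y1 Y2 _ _ _] := bider_inBA Iy.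
  pose wx b := x.2 b + x.1 b; pose wy b := y.2 b + y.1 b.
  have -> : x.2 (y.2 a) + y.1 (x.2 a) + (y.1 (x.1 a) - x.1 (y.1 a)) =
            wy (wx a) - wx (y.1 a) + x.2 (wy a) - y.2 (wx a).
    by rewrite /wx /wy !(linD X1, linD X2, linD Y1, linD Y2); lmod_ring.
  rewrite (inBA2_annihilated (Ky a) Ix) (inBA2_annihilated (Kx a) Iy) addr0 subr0.
  exact: (annihilatedD (Ky (wx a)) (annihilatedN (Kx (y.1 a)))).
Qed.

Lemma inBA2_antisym (x y : pairA A) a : inBA x -> inBA y -> x.2 (y.1 a) = - x.2 (y.2 a).
Proof.
move=> Ix Iy; have := inBA2_annihilated (inBA_annihilated_sum a Iy) Ix.
by rewrite (linD (bider2_lin (bider_inBA Ix))) addrC => /eqP; rewrite addr_eq0 => /eqP.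
Qed.

End Annihilators.

Section BAmodule.
Variables (k : comPzRingType) (A : leibAlg k).

Record BA := MkBA { bval : pairA A; bvalP : inBA bval }.

Lemma bval_inj : injective bval.
Proof. by move=> [x Ix] [y Iy] /= ex; subst y; congr MkBA. Qed.

Lemma inBA0 : inBA ((fun _ => 0, fun _ => 0) : pairA A).
Proof.
have -> : ((fun _ => 0, fun _ => 0) : pairA A) = pair_scale 0 (bold (lbr A) (lbr A) 0).
  by apply: pair_ext => a /=; rewrite scale0r.
exact/inBA_scale/inBA_gen/lbr_action.
Qed.

Lemma inBAN (x : pairA A) : inBA x -> inBA ((fun a => - x.1 a, fun a => - x.2 a) : pairA A).
Proof.
have -> : ((fun a => - x.1 a, fun a => - x.2 a) : pairA A) = pair_scale (-1) x.
  by apply: pair_ext => a /=; rewrite scaleN1r.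
exact: inBA_scale.
Qed.

Definition BA0 : BA := MkBA inBA0.
Definition BAopp (x : BA) : BA := MkBA (inBAN (bvalP x)).
Definition BAadd (x y : BA) : BA := MkBA (inBA_add (bvalP x) (bvalP y)).
Definition BAscale (c : k) (x : BA) : BA := MkBA (inBA_scale c (bvalP x)).

Ltac BA_ext := move=> *; apply: bval_inj; apply: pair_ext => ? /=.

Lemma BAaddA : associative BAadd. Proof. by BA_ext; rewrite addrA. Qed.
Lemma BAaddC : commutative BAadd. Proof. by BA_ext; rewrite addrC. Qed.
Lemma BAadd0 : left_id BA0 BAadd. Proof. by BA_ext; rewrite add0r. Qed.
Lemma BAaddN : left_inverse BA0 BAopp BAadd. Proof. by BA_ext; rewrite addNr. Qed.

HB.instance Definition _ := gen_eqMixin BA.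
HB.instance Definition _ := gen_choiceMixin BA.
HB.instance Definition _ := GRing.isZmodule.Build BA BAaddA BAaddC BAadd0 BAaddN.

Lemma BAscaleA a b v : BAscale a (BAscale b v) = BAscale (a * b) v.
Proof. by BA_ext; rewrite scalerA. Qed.
Lemma BAscale1 : left_id 1 BAscale. Proof. by BA_ext; rewrite scale1r. Qed.
Lemma BAscaleDr : right_distributive BAscale +%R. Proof. by BA_ext; rewrite scalerDr. Qed.
Lemma BAscaleDl v : {morph BAscale^~ v : a b / a + b}. Proof. by BA_ext; rewrite scalerDl. Qed.

HB.instance Definition _ :=
  GRing.Zmodule_isLmodule.Build k BA BAscaleA BAscale1 BAscaleDr BAscaleDl.

End BAmodule.

Section BAactor.
Variables (k : comPzRingType) (A : leibAlg k).
Hypothesis cond1 : condition1 A.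

Definition brBA (x y : BA A) : BA A := MkBA (inBA_br (bvalP x) (bvalP y)).

Lemma brBA_linl c (x y z : BA A) : brBA (c *: x + y) z = c *: brBA x z + brBA y z.
Proof.
have [Z1 _ _ _ _] := bider_inBA (bvalP z).
by apply: bval_inj; apply: pair_ext => a /=; rewrite Z1; lmod_ring.
Qed.

Lemma brBA_linr c (x y z : BA A) : brBA z (c *: x + y) = c *: brBA z x + brBA z y.
Proof.
have [Z1 Z2 _ _ _] := bider_inBA (bvalP z).
by apply: bval_inj; apply: pair_ext => a /=; rewrite ?(Z1, Z2); lmod_ring.
Qed.

Lemma brBA_leibniz (x y z : BA A) :
  brBA x (brBA y z) = brBA (brBA x y) z - brBA (brBA x z) y.
Proof.
have [X1 X2 _ _ _] := bider_inBA (bvalP x).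
have [Y1 _ _ _ _] := bider_inBA (bvalP y); have [Z1 _ _ _ _] := bider_inBA (bvalP z).
apply: bval_inj; apply: pair_ext => a /=.
  by rewrite !(linB X1, linB Y1, linB Z1); lmod_ring.
rewrite !(linD X2, linD Y1, linD Z1, linB Y1, linB Z1).
by rewrite (inBA2_antisym cond1 _ (bvalP x) (bvalP z)); lmod_ring.
Qed.

Definition BAalg : leibAlg k := LeibAlg brBA_linl brBA_linr brBA_leibniz.

Definition lBA (x : BAalg) (a : A) : A := (bval x).2 a.
Definition rBA (a : A) (x : BAalg) : A := (bval x).1 a.
Definition dBA (a : A) : BAalg := MkBA (inBA_gen a (lbr_action A)).

Lemma BA_action : is_action lBA rBA.
Proof.
split.
- by split=> [c x y a | c x a1 a2] //=; apply: (bider2_lin (bider_inBA (bvalP x))).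
- by split=> [c a1 a2 x | c a x y] //=; apply: (bider1_lin (bider_inBA (bvalP x))).
- by move=> a1 a2 x; apply: (bider1_br (bider_inBA (bvalP x))).
- by move=> a1 a2 x; apply: (bider2_br_r (bider_inBA (bvalP x))).
split=> //=.
- by move=> x a1 a2; apply: (bider2_br (bider_inBA (bvalP x))).
- by move=> x y a; rewrite /lBA /rBA /= (inBA2_antisym cond1 _ (bvalP x) (bvalP y)); lmod_ring.
- by move=> x y a; rewrite /lBA /rBA /=; lmod_ring.
Qed.

Lemma BA_actor : is_actor lBA rBA dBA.
Proof.
split.
  split; last split=> //.
  - by split=> [c a1 a2 | a1 a2]; apply: bval_inj; [apply: bold_linear | apply: bold_lbr];
      apply: lbr_action.
  - exact: BA_action.
  - move=> x a; have bx := bider_inBA (bvalP x).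
    by apply: bval_inj; apply: pair_ext => a' /=; rewrite ?(bider2_br_r bx) ?(bider2_br bx);
      lmod_ring.
  - move=> x a; have bx := bider_inBA (bvalP x).
    apply: bval_inj; apply: pair_ext => a' /=; first exact: (bider1_br bx).
    by rewrite (bider_ann bx) (bider1_derivation bx); lmod_ring.
move=> C lC rC actC; exists (fun c => MkBA (inBA_gen c actC) : BAalg); split=> //.
- by split=> [c c1 c2 | c1 c2]; apply: bval_inj; [apply: bold_linear | apply: bold_lbr].
- move=> psi _ lpsi rpsi c; apply: bval_inj; apply: pair_ext => a /=.
    exact: rpsi.
  exact: lpsi.
Qed.

End BAactor.

Section ActorUniqueness.
Variables (k : comPzRingType) (A G : leibAlg k).
Variables (lG : G -> A -> A) (rG : A -> G -> A) (d : A -> G).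
Hypothesis actorG : is_actor lG rG d.

Lemma actor_action : is_action lG rG.
Proof. by case: actorG => [[]]. Qed.

Lemma actor_condition1 : condition1 A.
Proof.
move=> B C lB rB lC rC actB actC a b c; case: actorG => _ univ.
have [phB [_ lphB rphB _]] := univ B lB rB actB.
have [phC [_ lphC _ _]] := univ C lC rC actC.
rewrite -!lphC -rphB -lphB; exact: (action_antisym_r actor_action).
Qed.

Lemma actor_endo_id (f : G -> G) :
  is_leib_hom f -> (forall g a, lG (f g) a = lG g a) ->
  (forall g a, rG a (f g) = rG a g) -> f =1 id.
Proof.
move=> hom_f lf rf g; case: actorG => _ /(_ G lG rG actor_action) [phi [_ _ _ uniq]].
have := uniq id (leib_hom_id G) (fun _ _ => erefl) (fun _ _ => erefl) g.
by rewrite (uniq f hom_f lf rf) => <-.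
Qed.

Hypothesis cond1 : condition1 A.

Let boldG (g : G) : BAalg cond1 := MkBA (inBA_gen g actor_action).

Lemma actor_isomorphic_BA : actor_is_BA lG rG d.
Proof.
case: (actorG) => [[_ _ _ [_ d_l d_r]]] /(_ _ _ _ (BA_action cond1)).
move=> [psi [hom_psi lpsi rpsi _]].
have hom_boldG : is_leib_hom boldG.
  by split=> [c g h | g h]; apply: bval_inj; [apply: bold_linear | apply: bold_lbr];
    apply: actor_action.
have psi_boldG g : psi (boldG g) = g.
  by apply: (actor_endo_id (leib_hom_comp hom_boldG hom_psi)) => h a /=;
    rewrite ?lpsi ?rpsi.
have bold_psi x : bold lG rG (psi x) = bval x.
  by apply: pair_ext => a /=; rewrite ?lpsi ?rpsi.
split.
- by move=> g h ebold; rewrite -(psi_boldG g) -(psi_boldG h); congr psi; apply: bval_inj.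
- move=> x; split=> [Ix | [g <-]]; last exact: (inBA_gen _ actor_action).
  by exists (psi (MkBA Ix)); rewrite bold_psi.
- move=> c g h; exact: (bold_linear actor_action).
- move=> g h; exact: (bold_lbr actor_action).
- by move=> a; apply: pair_ext => a' /=; [apply: d_r | apply: d_l].
Qed.

End ActorUniqueness.

Theorem theorem4p5 (k : comPzRingType) (A : leibAlg k) :
  (has_actor A <-> condition1 A) /\
  (condition1 A ->
   forall (G : leibAlg k) (lG : G -> A -> A) (rG : A -> G -> A) (d : A -> G),
     is_actor lG rG d -> actor_is_BA lG rG d).
Proof.
split; first split.
- by move=> [G [lG [rG [d actorG]]]]; exact: (actor_condition1 actorG).
- move=> cond1; exists (BAalg cond1), (@lBA _ _ cond1), (@rBA _ _ cond1), (@dBA _ _ cond1).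
  exact: BA_actor.
- by move=> cond1 G lG rG d actorG; apply: actor_isomorphic_BA.
Qed.
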